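(* Let $X$ be a compact metric space and $G$ a uniformly equicontinuous group of homeomorphisms of $X$ generated (as a group) by a finite set $G_1$. Then the pseudogroup $\mathcal G(G)$ generated by $G$ has no $(\mathcal G(G),G_1)$-expansive Borel probability measures.
   Context: $\mathrm{Homeo}(X)$: homeomorphisms $g:D_g\to R_g$ between open subsets of $X$, composed on natural domains $D_{h\circ g}=g^{-1}(D_h)$. The pseudogroup generated by $\Gamma\subset\mathrm{Homeo}(X)$ is the set of $g\in\mathrm{Homeo}(X)$ such that each $x\in D_g$ has a neighborhood $U_x\subset D_g$ with $g|_{U_x}=g_1^{e_1}\circ\cdots\circ g_k^{e_k}|_{U_x}$ for some $g_i\in\Gamma$, $e_i\in\{\pm1\}$. $G$ is uniformly equicontinuous if for every $\varepsilon>0$ there is $\delta>0$ with $d(x,y)<\delta\Rightarrow d(g(x),g(y))<\varepsilon$ for all $g\in G$, $x,y\in X$. With generating set $G_1$: $\mathcal G_n=\{g_1\circ\cdots\circ g_n:g_i\in G_1\}$, $\mathcal G_n^x=\{g\in\mathcal G_n:x\in D_g\}$, $\Phi_\delta(x)=\{y\in X: d(g(x),g(y))\le\delta\ \forall n\in\mathbb N,\ \forall g\in\mathcal G_n^x\cap\mathcal G_n^y\}$. A Borel probability measure $\mu$ is $(\mathcal G(G),G_1)$-expansive if there is $\delta>0$ with $\mu(\Phi_\delta(x))=0$ for every $x\in X$. *)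

From HB Require Import structures.
From mathcomp Require Import all_boot all_order all_algebra.
From mathcomp Require Import all_classical all_reals all_analysis.
Set Implicit Arguments. Unset Strict Implicit. Unset Printing Implicit Defensive.
Import Order.TTheory GRing.Theory Num.Theory.
Local Open Scope classical_set_scope.
Local Open Scope ring_scope.

(* Metric spaces equipped with a base point (needed by the measure library,
   whose measurable types are pointed; harmless: a space carrying a
   probability measure is nonempty). *)
#[short(type="pointedMetricType")]
HB.structure Definition PointedMetric (K : numDomainType) :=
  { M of Metric K M & Pointed M }.

Record homeo (X : topologicalType) := Homeo {
  hfun : X -> X ;
  hinv : X -> X ;
  hfunK : cancel hfun hinv ;
  hinvK : cancel hinv hfun ;
  hfun_cont : continuous hfun ;
  hinv_cont : continuous hinv }.

Inductive gen_group (X : topologicalType) (I : Type) (gens : I -> homeo X)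
  : (X -> X) -> Prop :=
| gen_id : gen_group gens id
| gen_gen i : gen_group gens (hfun (gens i))
| gen_inv i : gen_group gens (hinv (gens i))
| gen_comp f g : gen_group gens f -> gen_group gens g -> gen_group gens (f \o g).

Definition unif_equicontinuous (R : realType) (X : pointedMetricType R)
  (G : (X -> X) -> Prop) :=
  forall eps : R, 0 < eps -> exists2 delta : R, 0 < delta &
    forall g, G g -> forall x y : X, mdist x y < delta -> mdist (g x) (g y) < eps.

Definition word_map (X : topologicalType) (I : Type) (gens : I -> homeo X)
  (w : seq I) : X -> X :=
  foldr (fun i f => hfun (gens i) \o f) id w.

Definition Gn (X : topologicalType) (I : Type) (gens : I -> homeo X) (n : nat)
  : (X -> X) -> Prop :=
  fun g => exists w : seq I, size w = n /\ g = word_map gens w.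

(* Phi_delta(x); here every generator is a global homeomorphism, so all domains
   are X and \mathcal G_n^x = \mathcal G_n. *)
Definition Phi (R : realType) (X : pointedMetricType R) (I : Type) (gens : I -> homeo X)
  (delta : R) (x : X) : set X :=
  [set y | forall n : nat, (0 < n)%N -> forall g, Gn gens n g ->
             mdist (g x) (g y) <= delta].

Notation borel X := (g_sigma_algebraType (@open X)).

Definition expansive_measure (R : realType) (X : pointedMetricType R) (I : Type)
  (gens : I -> homeo X) (mu : probability (borel X) R) :=
  exists2 delta : R, 0 < delta & forall x : X, mu (Phi gens delta x) = 0%E.

From HB Require Import structures.
From mathcomp Require Import all_boot all_order all_algebra.
From mathcomp Require Import all_classical all_reals all_analysis.
Import Order.TTheory GRing.Theory Num.Theory.
Local Open Scope classical_set_scope.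
Local Open Scope ring_scope.

(* Equicontinuity of the group, applied with [eps := delta], gives a [d > 0]
   such that the whole ball of radius [d] around [x] lies in [Phi_delta(x)].
   As [Phi_delta(x)] is closed, hence Borel, its interior is an open
   neighbourhood of [x] of measure zero, and finitely
   many of them cover the compact space, which would then have measure zero. *)

Lemma borel_closed_measurable {T : ptopologicalType} (A : set T) :
  closed A -> measurable (A : set (borel T)).
Proof.
move=> /closed_openC open_CA; rewrite -[A]setCK.
by apply: measurableC; apply: sub_sigma_algebra.
Qed.

Lemma compact_locally_null {R : realType} {T : ptopologicalType}
    (mu : {content set (borel T) -> \bar R}) (U : T -> set T) :
  compact [set: T] -> (forall x, open (U x)) -> (forall x, U x x) ->
  (forall x, mu (U x) = 0%E) -> mu [set: T] = 0%E.
Proof.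
rewrite compact_cover => cpt U_open U_x mu_U0.
have [D _ covD] := cpt T [set: T] U (fun x _ => U_open x)
  (fun x _ => ex_intro2 _ _ x I (U_x x)).
apply/eqP; rewrite -measure_le0.
apply: le_trans (content_sub_fsum mu _ _ _ covD) _.
- exact: finite_fset.
- by move=> x _; apply: sub_sigma_algebra.
- exact: measurableT.
- by rewrite fsbig1.
Qed.

Section expansive_neighbourhoods.
Context {R : realType} {X : pointedMetricType R} {I : Type}.
Variable gens : I -> homeo X.
Hypothesis equicont : unif_equicontinuous (gen_group gens).

Lemma word_map_gen_group (w : seq I) : gen_group gens (word_map gens w).
Proof.
elim: w => [|i w IH]; first exact: gen_id.
exact: gen_comp (gen_gen gens i) IH.
Qed.

Lemma closed_Phi (delta : R) (x : X) : closed (Phi gens delta x).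
Proof.
move=> y cl_y n n_gt0 _ [w [sw ->]].
apply/ler_addgt0Pr => e e_gt0.
have [d d_gt0 hd] := equicont _ e_gt0.
have [z [Phi_z yz]] := cl_y _ (nbhsx_ballx y d d_gt0).
move: yz; rewrite ballEmdist /= => /(hd _ (word_map_gen_group w)) wyz.
have Phi_wz := Phi_z n n_gt0 _ (ex_intro _ w (conj sw erefl)).
apply: le_trans (metric_triangle _ (word_map gens w z) _) _.
by rewrite lerD // metric_sym ltW.
Qed.

Lemma nbhs_Phi (delta : R) (x : X) : 0 < delta -> nbhs x (Phi gens delta x).
Proof.
move=> delta_gt0; have [d d_gt0 hd] := equicont _ delta_gt0.
apply: filterS (nbhsx_ballx x d d_gt0) => y; rewrite ballEmdist /= => xy.
by move=> n _ _ [w [_ ->]]; exact/ltW/hd/xy/word_map_gen_group.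
Qed.

End expansive_neighbourhoods.

Theorem mainTheorem17 (R : realType) (X : pointedMetricType R) (I : finType)
  (gens : I -> homeo X) :
  compact [set: X] ->
  unif_equicontinuous (gen_group gens) ->
  forall mu : probability (borel X) R, ~ expansive_measure gens mu.
Proof.
move=> cpt equicont mu [delta delta_gt0 mu_Phi0].
have int_Phi0 x : mu (interior (Phi gens delta x)) = 0%E.
  apply: subset_measure0 (mu_Phi0 x); last exact: interior_subset.
  - by apply: sub_sigma_algebra; exact: open_interior.
  - exact: (@borel_closed_measurable X _ (closed_Phi gens equicont delta x)).
suff : mu [set: X] = 0%E by rewrite probability_setT => /eqP; rewrite eqe oner_eq0.
apply: (compact_locally_null mu (fun x => interior (Phi gens delta x)) cpt).
- by move=> x; exact: open_interior.
- by move=> x; exact: nbhs_Phi gens equicont delta x delta_gt0.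
- exact: int_Phi0.
Qed.
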